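(* Let $F$ be a $4$-regular graph, let $D$ be a directed version of $F$, let $\mathbf{o}$ be a transitional orientation of $F$, and let $P$ be a circuit partition of $F$. Then for every closed walk $W$ of $F$, \[\sigma(D,W)\cdot \Delta_{D,\mathbf{o}}|_{\tau(P)} = \sigma(\mathrm{Tch}_{\mathbf{o}}(P),\pi_P(W)),\] where the $\sigma$-vectors are regarded as row vectors.
   Context: Graphs: $G=(V,H,E,\epsilon)$ with finite sets of vertices $V$ and half-edges $H$, a partition $E$ of $H$ into unordered pairs (edges), and $\epsilon:H\to V$; loops and multiple edges allowed. A directed version orders each edge as (tail, head). A single transition is an unordered pair of distinct half-edges incident with a common vertex; a directed single transition is such an ordered pair. A closed walk is a sequence $((h_1,h_2),\dots,(h_{n-1},h_n))$ of directed single transitions with $\{h_2,h_3\},\{h_4,h_5\},\dots,\{h_n,h_1\}$ edges, up to cyclic shift. For a directed version $D$ and closed walk $W$, $\sigma(D,W)\in\mathbb Z^{E}$ counts, at each edge $e$, traversals of $e$ along its direction minus traversals against it. A circuit is a nonempty closed walk using each half-edge at most once, with orientation forgotten. $F$ is $4$-regular if every vertex is incident with exactly $4$ half-edges. A transition at $v$ is a partition of the four half-edges at $v$ into two single transitions; $\mathfrak T(F)$ is the set of all transitions. A circuit partition $P$ is a set of circuits of $F$ such that every half-edge lies in exactly one single transition of exactly one circuit of $P$; $\tau(P)$ is the set of transitions both of whose single transitions occur in circuits of $P$ (one transition per vertex). The touch-graph $\mathrm{Tch}(P)$ has vertex set $P$, half-edge set the set of single transitions occurring in circuits of $P$, edge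 set $\tau(P)$ (each transition being a pair of single transitions), and maps each single transition to the circuit containing it. A transitional orientation $\mathbf o$ assigns to each $t\in\mathfrak T(F)$ one of its two single transitions $\mathbf o(t)$. $\mathrm{Tch}_{\mathbf o}(P)$ is the directed version of $\mathrm{Tch}(P)$ in which each edge $t$ has head $\mathbf o(t)$ and tail the other single transition of $t$. For a closed walk $W$ of $F$, $\pi_P(W)$ is obtained by replacing each directed single transition $(h,h')$ of $W$ by $(s,s')$, where $s,s'$ are the single transitions of circuits of $P$ containing $h$, $h'$ respectively, and deleting the pairs with $s=s'$; it is a closed walk of $\mathrm{Tch}(P)$ in which each remaining pair $(s,s')$ traverses the edge $\{s,s'\}\in\tau(P)$ from half-edge $s$ to half-edge $s'$. The edge-transition incidence matrix $\Delta_{D,\mathbf o}$ is the $E(F)\times\mathfrak T(F)$ matrix over $\mathbb Q$ whose $(e,t)$ entry is $1$ if $e\cap\mathbf o(t)=\{h\}$ with $h$ the tail of $e$ in $D$, $-1$ if $e\cap \mathbf o(t)=\{h\}$ with $h$ the head of $e$ in $D$, and $0$ otherwise. For $Y\subseteq\mathfrak T(F)$, $A|_Y$ denotes the column restriction to $Y$. *)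

From mathcomp Require Import all_boot all_order all_algebra.
Set Implicit Arguments. Unset Strict Implicit. Unset Printing Implicit Defensive.
Import GRing.Theory Num.Theory.
Local Open Scope ring_scope.

(* A graph (V,H,E,eps): finite vertex type V, finite half-edge type H,
   the partition E of H into unordered pairs given by a fixed-point-free
   involution [mate] (the edges are the sets {h, mate h}), eps : H -> V. *)
Section Defs.
Variables (V H : finType).

Definition is_graph (mate : H -> H) : Prop :=
  involutive mate /\ forall h, mate h != h.

Definition edges (mate : H -> H) : {set {set H}} :=
  [set [set h; mate h] | h : H].

Definition hedges_at (eps : H -> V) (v : V) : {set H} := [set h | eps h == v].

Definition four_regular (eps : H -> V) : Prop :=
  forall v, #|hedges_at eps v| = 4%N.

(* directed version: tl h <-> h is the tail of its edge; head is the other *)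
Definition directed_version (mate : H -> H) (tl : pred H) : Prop :=
  forall h, tl (mate h) = ~~ tl h.

Definition single_transition (eps : H -> V) (s : {set H}) : bool :=
  (#|s| == 2%N) && [exists v, s \subset hedges_at eps v].

Definition transitions (eps : H -> V) : {set {set {set H}}} :=
  [set t : {set {set H}} | [exists v,
     [&& partition t (hedges_at eps v), #|t| == 2%N &
         [forall s in t, single_transition eps s]]]].

Definition transitional_orientation (eps : H -> V)
    (o : {set {set H}} -> {set H}) : Prop :=
  forall t, t \in transitions eps -> o t \in t.

Definition dst (eps : H -> V) (p : H * H) : bool :=
  (p.1 != p.2) && (eps p.1 == eps p.2).

(* closed walk ((h1,h2),...,(h_{n-1},h_n)), with {h2,h3},...,{hn,h1} edges *)
Definition closed_walk (mate : H -> H) (eps : H -> V) (W : seq (H * H)) : bool :=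
  all (dst eps) W && cycle (fun p q : H * H => mate p.2 == q.1) W.

(* edge traversals of a closed walk: (h2,h3), (h4,h5), ..., (hn,h1) *)
Definition walk_trav (W : seq (H * H)) : seq (H * H) :=
  zip (unzip2 W) (rot 1 (unzip1 W)).

Definition walk_hedges (W : seq (H * H)) : seq H :=
  flatten [seq [:: p.1; p.2] | p <- W].

(* circuit: nonempty closed walk using each half-edge at most once
   (orientation/cyclic shift forgotten: any representative is taken) *)
Definition circuit (mate : H -> H) (eps : H -> V) (c : seq (H * H)) : bool :=
  [&& closed_walk mate eps c, c != [::] & uniq (walk_hedges c)].

(* circuit partition, given as a list of representatives of its circuits:
   every half-edge lies in exactly one single transition of exactly one
   circuit *)
Definition circuit_partition (mate : H -> H) (eps : H -> V)
    (P : seq (seq (H * H))) : Prop :=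
  all (circuit mate eps) P /\
  forall h, count (fun c => h \in walk_hedges c) P = 1%N.

Definition SP (P : seq (seq (H * H))) : {set {set H}} :=
  [set [set p.1; p.2] | p in flatten P].

Definition sP (P : seq (seq (H * H))) (h : H) : {set H} :=
  odflt set0 [pick s in SP P | h \in s].

Definition tauP (eps : H -> V) (P : seq (seq (H * H))) : {set {set {set H}}} :=
  [set t in transitions eps | t \subset SP P].

(* pi_P(W), as a sequence of edge traversals (s,s') of Tch(P) *)
Definition pi_walk (P : seq (seq (H * H))) (W : seq (H * H))
    : seq ({set H} * {set H}) :=
  [seq (sP P p.1, sP P p.2) | p <- [seq p <- W | sP P p.1 != sP P p.2]].

(* Tch_o(P): the edge t in tauP(P) has head o t, tail the other single
   transition; tch_tail s <-> s is the tail of its edge *)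
Definition tch_tail (eps : H -> V) (o : {set {set H}} -> {set H})
    (P : seq (seq (H * H))) (s : {set H}) : bool :=
  [exists t in tauP eps P, (s \in t) && (o t != s)].

Definition Delta (tl : pred H) (o : {set {set H}} -> {set H})
    (e : {set H}) (t : {set {set H}}) : rat :=
  \sum_(h | e :&: o t == [set h]) (if tl h then 1 else -1).

End Defs.

(* sigmaV(D, W)_e for a walk given by its sequence of edge traversals (a,b)
   (edge {a,b} traversed from a to b) in a directed graph whose tails are
   given by tl: traversals along the direction minus traversals against. *)
Definition sigmaV (X : finType) (tl : pred X) (tr : seq (X * X)) (e : {set X})
    : rat :=
  \sum_(p <- tr) (if [set p.1; p.2] == e then (if tl p.1 then 1 else -1) else 0).

From mathcomp Require Import all_boot all_order all_algebra.
Import GRing.Theory Num.Theory.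
Local Open Scope ring_scope.
Set Implicit Arguments. Unset Strict Implicit.

(* Both sides are sums, over the directed single transitions (a, b) of W, of
   the potential difference [b \in o t] - [a \in o t].  On the left, the
   traversal of the edge {h, mate h} from h contributes
   sign(h) * Delta({h, mate h}, t) = [h \in o t] - [mate h \in o t], and
   regrouping the traversals (h2,h3), ..., (hn,h1) of W along its transitions
   (h1,h2), ..., (h(n-1),hn) gives the sum.  On the right, a step (a, b) of W at
   the vertex of t with sP a <> sP b traverses the edge t of Tch_o(P) from sP a
   to sP b, contributing +1 if sP b = o t (the head of t) and -1 if sP a = o t;
   as h \in o t iff sP h = o t, this is the same difference.  Steps at other
   vertices contribute 0 to both sides. *)

Lemma eq_of_count_eq1 (T : eqType) (a : pred T) (s : seq T) x y :
  count a s = 1%N -> x \in s -> y \in s -> a x -> a y -> x = y.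
Proof.
rewrite -size_filter; case Ez: (filter a s) => [|z []] // _ xs ys ax ay.
have: x \in filter a s by rewrite mem_filter ax.
have: y \in filter a s by rewrite mem_filter ay.
by rewrite Ez !inE => /eqP-> /eqP->.
Qed.

Lemma flatten_map_uniq_inj (S T : eqType) (f : S -> seq T) (s : seq S) p p' x :
  uniq (flatten [seq f q | q <- s]) -> p \in s -> p' \in s ->
  x \in f p -> x \in f p' -> p = p'.
Proof.
elim: s => //= z s IH; rewrite cat_uniq => /and3P[_ disj uniq_s].
have notin_s q : q \in s -> x \in f z -> x \in f q -> False.
  move=> qs xz xq; case/hasP: disj; exists x => //.
  by apply/flatten_mapP; exists q.
rewrite !inE => /predU1P[->|ps] /predU1P[->|p's] // xp xp'.
- by case: (notin_s p' p's xp xp').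
- by case: (notin_s p ps xp' xp).
- exact: IH.
Qed.

Section CircuitPartition.
Variables (V H : finType) (mate : H -> H) (eps : H -> V).
Variable P : seq (seq (H * H)).
Hypothesis hP : circuit_partition mate eps P.

Lemma SP_disjoint s1 s2 h :
  s1 \in SP P -> s2 \in SP P -> h \in s1 -> h \in s2 -> s1 = s2.
Proof.
case: hP => /allP circP countP.
case/imsetP=> p /flattenP[c cP pc] ->; case/imsetP=> p' /flattenP[c' c'P p'c] ->.
have set2E q : (h \in [set q.1; q.2]) = (h \in [:: q.1; q.2]) by rewrite !inE.
rewrite !set2E => hp hp'.
have wh q d : q \in d -> h \in [:: q.1; q.2] -> h \in walk_hedges d.
  by move=> qd hq; apply/flatten_mapP; exists q.
have ecc : c = c'.
  by apply: (eq_of_count_eq1 (countP h)) => //; [exact: wh pc hp | exact: wh p'c hp'].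
have /and3P[_ _ uniq_c] := circP c cP; rewrite -ecc in p'c.
by rewrite (flatten_map_uniq_inj uniq_c pc p'c hp hp').
Qed.

Lemma sP_block h : sP P h \in SP P /\ h \in sP P h.
Proof.
case: hP => _ countP.
have /hasP[c cP /flatten_mapP[p pc hp]] : has (fun c => h \in walk_hedges c) P.
  by rewrite has_count countP.
rewrite /sP; case: pickP => [s /andP[]|] // /(_ [set p.1; p.2]) /=.
have -> : [set p.1; p.2] \in SP P by apply/imsetP; exists p => //; apply/flattenP; exists c.
by move: hp; rewrite !inE => ->.
Qed.

Lemma SP_sP s h : s \in SP P -> h \in s -> s = sP P h.
Proof. by case: (sP_block h) => sPh hsPh sS hs; apply: SP_disjoint sS sPh hs hsPh. Qed.

Lemma mem_sP_partition t D h :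
  partition t D -> t \subset SP P -> (sP P h \in t) = (h \in D).
Proof.
case/and3P=> /eqP <- _ _ tSP; apply/idP/bigcupP => [tsP|[s st hs]].
- by exists (sP P h) => //; case: (sP_block h).
- by rewrite -(SP_sP (subsetP tSP s st) hs).
Qed.

Lemma partition_SP_imset t D : partition t D -> t \subset SP P -> t = sP P @: D.
Proof.
move=> tD tSP; apply/setP=> s; apply/idP/imsetP => [st|[h hD ->]].
- have /set0Pn[h hs] : s != set0 by case/and3P: tD => _ _; apply: contraNneq => <-.
  have sPh := SP_sP (subsetP tSP s st) hs.
  by exists h => //; rewrite -(mem_sP_partition h tD tSP) -sPh.
- by rewrite (mem_sP_partition h tD tSP).
Qed.

Lemma tauP_at t : t \in tauP eps P ->
  exists v, [/\ partition t (hedges_at eps v), #|t| = 2%N & t \subset SP P].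
Proof. by rewrite !inE => /andP[/existsP[v /and3P[tv /eqP t2 _]] tSP]; exists v. Qed.

Lemma tauP_inj t t' s :
  t \in tauP eps P -> t' \in tauP eps P -> s \in t -> s \in t' -> t = t'.
Proof.
move=> /tauP_at[v [tv _ tSP]] /tauP_at[v' [t'v' _ t'SP]] st st'.
rewrite (partition_SP_imset tv tSP) in st *; rewrite (partition_SP_imset t'v' t'SP).
case/imsetP: st => h hv sPh; rewrite sPh (mem_sP_partition _ t'v' t'SP) in st'.
by move: hv st'; rewrite !inE => /eqP-> /eqP->.
Qed.

Lemma tch_tail_tauP o t s :
  t \in tauP eps P -> s \in t -> tch_tail eps o P s = (o t != s).
Proof.
move=> tT st; apply/existsP/idP => [[t' /andP[t'T /andP[st' ots]]]|ots].
- by rewrite (tauP_inj tT t'T st st').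
- by exists t; rewrite tT st.
Qed.

End CircuitPartition.

Lemma sigmaV_loop (T : finType) (tl : pred T) (t : {set T}) x :
  #|t| = 2%N -> sigmaV tl [:: (x, x)] t = 0.
Proof.
move=> t2; rewrite /sigmaV big_seq1 /= setUid.
by case: eqP => // x_t; have := cards1 x; rewrite x_t t2.
Qed.

Lemma sigmaV_step (T : finType) (tl : pred T) (t : {set T}) ot x y :
  #|t| = 2%N -> ot \in t -> {in t, forall s, tl s = (ot != s)} ->
  (x \in t) = (y \in t) ->
  sigmaV tl [:: (x, y)] t = (y == ot)%:R - (x == ot)%:R.
Proof.
move=> t2 ot_t tl_t xy_t.
have [<-|nxy] := eqVneq x y; first by rewrite sigmaV_loop ?subrr.
rewrite /sigmaV big_seq1 /=.
case xt: (x \in t).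
- have Et : [set x; y] = t.
    apply/eqP; rewrite eqEcard t2 cards2 nxy leqnn andbT.
    by apply/subsetP=> z; rewrite !inE => /orP[] /eqP->; rewrite -?xy_t.
  move: ot_t; rewrite Et eqxx tl_t // -Et !inE.
  by case/orP=> /eqP->; rewrite eqxx eq_sym (negbTE nxy) ?subr0 ?sub0r.
- have Nt : [set x; y] != t by apply: contraFN xt => /eqP<-; rewrite !inE eqxx.
  have notin_t z : z \notin t -> (z == ot) = false.
    by move=> zt; apply: contraNF zt => /eqP->.
  by rewrite (negbTE Nt) !notin_t ?subrr -?xy_t ?xt.
Qed.

Lemma sigmaV_pi_walk (H : finType) (P : seq (seq (H * H))) (tl : pred {set H})
    (t : {set {set H}}) (W : seq (H * H)) :
  #|t| = 2%N ->
  sigmaV tl (pi_walk P W) t = \sum_(p <- W) sigmaV tl [:: (sP P p.1, sP P p.2)] t.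
Proof.
move=> t2; rewrite {1}/sigmaV /pi_walk big_map big_filter big_mkcond.
apply: eq_bigr => p _; have [->|_] := eqVneq; first by rewrite sigmaV_loop.
by rewrite /sigmaV big_seq1.
Qed.

Lemma sigmaV_dot (X : finType) (tl : pred X) (tr : seq (X * X))
    (E : {set {set X}}) (F : {set X} -> rat) :
  {in tr, forall p, [set p.1; p.2] \in E} ->
  \sum_(e in E) sigmaV tl tr e * F e
  = \sum_(p <- tr) (if tl p.1 then 1 else -1) * F [set p.1; p.2].
Proof.
move=> trE; rewrite /sigmaV; under eq_bigr do rewrite big_distrl.
rewrite exchange_big /=; apply: eq_big_seq => p ptr.
rewrite (bigD1 _ (trE p ptr)) /= eqxx big1 ?addr0 // => e /andP[_ /negbTE].
by rewrite eq_sym => ->; rewrite mul0r.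
Qed.

Lemma path_link_zip (T : Type) (e : rel T) (y z : T * T) (s : seq (T * T)) :
  path (fun p q => e p.2 q.1) y (rcons s z) ->
  all (fun q => e q.1 q.2) (zip (y.2 :: unzip2 s) (rcons (unzip1 s) z.1)).
Proof. by elim: s y => [|w s IH] y /=; [rewrite andbT | case/andP=> -> /IH]. Qed.

Lemma walk_trav_mate (V H : finType) (mate : H -> H) (eps : H -> V) W :
  closed_walk mate eps W -> {in walk_trav W, forall q, q.2 = mate q.1}.
Proof.
case/andP=> _; case: W => [|z s] //= /(@path_link_zip _ (fun a b => mate a == b)).
by rewrite /walk_trav /= rot1_cons => /allP mate_q q /mate_q /eqP.
Qed.

Lemma sum_walk_trav (H : finType) (R : zmodType) (f : H -> R) (W : seq (H * H)) :
  \sum_(q <- walk_trav W) (f q.1 - f q.2) = \sum_(p <- W) (f p.2 - f p.1).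
Proof.
have sz : size (unzip2 W) = size (rot 1 (unzip1 W)) by rewrite size_rot !size_map.
rewrite /walk_trav sumrB -(big_map fst predT f) -(big_map snd predT f).
rewrite -/(unzip1 _) -/(unzip2 _) unzip1_zip ?unzip2_zip ?sz //.
have rotW : perm_eq (rot 1 (unzip1 W)) (unzip1 W) by rewrite perm_rot.
by rewrite (perm_big _ rotW) !big_map [RHS]sumrB.
Qed.

Lemma Delta_edge (H : finType) (mate : H -> H) (tl : pred H)
    (o : {set {set H}} -> {set H}) t a :
  is_graph mate -> directed_version mate tl ->
  (if tl a then 1 else -1) * Delta tl o [set a; mate a] t
  = (a \in o t)%:R - (mate a \in o t)%:R.
Proof.
move=> [_ mate_neq] hD; set b := mate a; have nab : a != b by rewrite eq_sym mate_neq.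
have Delta1 c : [set a; b] :&: o t = [set c] ->
    Delta tl o [set a; b] t = if tl c then 1 else -1.
  by rewrite /Delta => ->; rewrite (big_pred1 c) // => h /=; rewrite (inj_eq set1_inj) eq_sym.
have Delta0 : #|[set a; b] :&: o t| != 1%N -> Delta tl o [set a; b] t = 0.
  by move=> not1; rewrite /Delta big_pred0 // => h; apply: contraNF not1 => /eqP->; rewrite cards1.
have capE c : c \in [set a; b] :&: o t = ((c == a) && (a \in o t)) || ((c == b) && (b \in o t)).
  by rewrite !inE andb_orl; case: eqP => [->|]; case: eqP => [->|].
case ia: (a \in o t); case ib: (b \in o t).
- rewrite Delta0 ?mulr0 ?subrr //.
  have -> : [set a; b] :&: o t = [set a; b].
    by apply/setP=> c; rewrite capE ia ib !inE !andbT.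
  by rewrite cards2 nab.
- have /Delta1-> : [set a; b] :&: o t = [set a].
    by apply/setP=> c; rewrite capE ia ib andbT andbF orbF inE.
  by case: (tl a); rewrite /= ?mulrNN mulr1 subr0.
- have /Delta1-> : [set a; b] :&: o t = [set b].
    by apply/setP=> c; rewrite capE ia ib andbT andbF inE.
  by rewrite hD; case: (tl a); rewrite /= ?mulrN ?mulNr mulr1 ?opprK sub0r.
- rewrite Delta0 ?mulr0 ?subrr //.
  have -> : [set a; b] :&: o t = set0.
    by apply/setP=> c; rewrite capE ia ib !andbF inE.
  by rewrite cards0.
Qed.

Lemma sigmaV_Delta_walk (V H : finType) (mate : H -> H) (eps : H -> V) (tl : pred H)
    (o : {set {set H}} -> {set H}) t W :
  is_graph mate -> directed_version mate tl -> closed_walk mate eps W ->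
  \sum_(e in edges mate) sigmaV tl (walk_trav W) e * Delta tl o e t
  = \sum_(p <- W) ((p.2 \in o t)%:R - (p.1 \in o t)%:R).
Proof.
move=> hF hD /walk_trav_mate trav_mate.
rewrite sigmaV_dot => [|q /trav_mate->]; last by apply/imsetP; exists q.1.
rewrite -(sum_walk_trav (fun h => (h \in o t)%:R)); apply: eq_big_seq => q /trav_mate->.
exact: Delta_edge.
Qed.

Unset Implicit Arguments.

Theorem mainTheorem4 (V H : finType) (mate : H -> H) (eps : H -> V)
    (hF : is_graph mate) (h4 : four_regular eps)
    (tl : pred H) (hD : directed_version mate tl)
    (o : {set {set H}} -> {set H}) (ho : transitional_orientation eps o)
    (P : seq (seq (H * H))) (hP : circuit_partition mate eps P)
    (W : seq (H * H)) (hW : closed_walk mate eps W) :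
  forall t : {set {set H}}, t \in tauP eps P ->
    \sum_(e in edges mate) sigmaV tl (walk_trav W) e * Delta tl o e t
    = sigmaV (tch_tail eps o P) (pi_walk P W) t.
Proof.
move=> t tT; have [v [tv t2 tSP]] := tauP_at tT.
have ot_t : o t \in t by apply: ho; move: tT; rewrite inE => /andP[].
have in_ot h : (h \in o t) = (sP P h == o t).
  apply/idP/eqP => [h_ot|<-]; last by case: (sP_block hP h).
  by rewrite -(SP_sP hP (subsetP tSP _ ot_t) h_ot).
rewrite (sigmaV_Delta_walk o t hF hD hW) sigmaV_pi_walk //.
apply: eq_big_seq => p pW; rewrite !in_ot (sigmaV_step t2 ot_t) //.
- by move=> s; apply: (tch_tail_tauP hP o tT).
- have /andP[_ /eqP same_v] : dst eps p by case/andP: hW => /allP/(_ p pW).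
  by rewrite !(mem_sP_partition hP _ tv tSP) !inE same_v.
Qed.
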